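(* Define $A_0=E_3$ and $B_0=F_3q^{-G_1-G_3}$, let $X=A_0B_0-q^{-2}B_0A_0$, and recursively for $k\ge1$ $$A_k=[2]_q^{-1}(A_{k-1}X-XA_{k-1}),\qquad B_k=[2]_q^{-1}(XB_{k-1}-B_{k-1}X).$$ Let $\mathcal E_{\alpha+\beta}(\zeta)=\sum_{k\ge0}A_k\zeta^k$ and $\mathcal E_{\delta-\alpha-\beta}(\zeta)=\sum_{k\ge0}B_k\zeta^k$. Then in $\mathrm U_q(\mathfrak{gl}_3)[[\zeta]]$: $$\mathcal E_{\alpha+\beta}(\zeta)=\kappa_q^{-1}N'_{31}N'_{11}(-q^{-2}\zeta)^{-1},\qquad \mathcal E_{\delta-\alpha-\beta}(\zeta)=\kappa_q^{-1}q^{-1}N'_{11}(-q^{-2}\zeta)^{-1}N'_{13}.$$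
   Context: Setting: $\hbar\in\mathbb C$, $q=e^\hbar$, $q^2\neq1$, $\kappa_q=q-q^{-1}$, $[\nu]_q=(q^\nu-q^{-\nu})/\kappa_q$ (so $[2]_q=q+q^{-1}$, assumed nonzero). Let $\mathfrak g=\mathbb CG_1\oplus\mathbb CG_2\oplus\mathbb CG_3$ and define linear forms $\alpha_1,\alpha_2$ on $\mathfrak g$ by $\alpha_1(G_1)=1,\alpha_1(G_2)=-1,\alpha_1(G_3)=0$, $\alpha_2(G_1)=0,\alpha_2(G_2)=1,\alpha_2(G_3)=-1$; put $H_1=G_1-G_2$, $H_2=G_2-G_3$. $\mathrm U_q(\mathfrak{gl}_3)$ is the unital associative $\mathbb C$-algebra generated by $E_1,E_2,F_1,F_2$ and symbols $q^X$, $X\in\mathfrak g$, with relations $q^0=1$, $q^{X_1}q^{X_2}=q^{X_1+X_2}$, $q^XE_iq^{-X}=q^{\alpha_i(X)}E_i$, $q^XF_iq^{-X}=q^{-\alpha_i(X)}F_i$, $[E_i,F_j]=\delta_{ij}(q^{H_i}-q^{-H_i})/\kappa_q$, and for $i\ne j$ the $q$-Serre relations $E_i^2E_j-[2]_qE_iE_jE_i+E_jE_i^2=0$, $F_i^2F_j-[2]_qF_iF_jF_i+F_jF_i^2=0$. For $\nu\in\mathbb C$ one writes $q^{X+\nu}=q^\nu q^X$. Further $E_3=E_1E_2-q^{-1}E_2E_1$, $F_3=F_2F_1-qF_1F_2$. In $\mathrm U_q(\mathfrak{gl}_3)[[\zeta]]$ ($\zeta$ a formal variable) let $N'_{11}(\zeta)=1-\zeta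 q^{-2G_1}$ (invertible as a series), $N'_{13}=\kappa_q qF_3q^{-G_1-G_3}$, $N'_{31}=\kappa_qE_3$; $N'_{11}(c\zeta)$ denotes substitution $\zeta\mapsto c\zeta$. *)

From HB Require Import structures.
From mathcomp Require Import all_boot all_order all_algebra.
Set Implicit Arguments. Unset Strict Implicit. Unset Printing Implicit Defensive.
Import Order.TTheory GRing.Theory Num.Theory.
Local Open Scope ring_scope.

Section Series.
Variable A : pzRingType.
Definition series := nat -> A.
Definition smul (f g : series) : series :=
  fun n => \sum_(i < n.+1) f i * g (n - i)%N.
Definition sone : series := fun n => if n == 0%N then 1 else 0.
Definition sconst (a : A) : series := fun n => if n == 0%N then a else 0.
Definition one_minus_zeta (a : A) : series :=
  fun n => if n == 0%N then 1 else if n == 1%N then - a else 0.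
End Series.

Section Uq.
Variables (K : fieldType) (A : algType K).

(* [e] plays the role of nu |-> q^nu = exp(hbar*nu);
   [qX a b c] plays the role of the symbol q^(a G1 + b G2 + c G3). *)
Definition is_Uqgl3 (e : K -> K) (E1 E2 F1 F2 : A) (qX : K -> K -> K -> A) : Prop :=
  let q := e 1 in
  let kq := q - q^-1 in
  let q2 := q + q^-1 in
  [/\ qX 0 0 0 = 1,
      (forall a b c a' b' c', qX a b c * qX a' b' c' = qX (a + a') (b + b') (c + c')),
      [/\ 
      (forall a b c, qX a b c * E1 * qX (- a) (- b) (- c) = e (a - b) *: E1),
      (forall a b c, qX a b c * E2 * qX (- a) (- b) (- c) = e (b - c) *: E2),
      (forall a b c, qX a b c * F1 * qX (- a) (- b) (- c) = e (- (a - b)) *: F1) &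
      (forall a b c, qX a b c * F2 * qX (- a) (- b) (- c) = e (- (b - c)) *: F2)],
      [/\ E1 * F1 - F1 * E1 = kq^-1 *: (qX 1 (-1) 0 - qX (-1) 1 0),
          E2 * F2 - F2 * E2 = kq^-1 *: (qX 0 1 (-1) - qX 0 (-1) 1),
          E1 * F2 - F2 * E1 = 0 &
          E2 * F1 - F1 * E2 = 0] &
      [/\ E1 ^+ 2 * E2 - q2 *: (E1 * E2 * E1) + E2 * E1 ^+ 2 = 0,
          E2 ^+ 2 * E1 - q2 *: (E2 * E1 * E2) + E1 * E2 ^+ 2 = 0,
          F1 ^+ 2 * F2 - q2 *: (F1 * F2 * F1) + F2 * F1 ^+ 2 = 0 &
          F2 ^+ 2 * F1 - q2 *: (F2 * F1 * F2) + F1 * F2 ^+ 2 = 0]].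

Fixpoint Akseq (t : K) (X A0 : A) (k : nat) : A :=
  if k is k'.+1 then t^-1 *: (Akseq t X A0 k' * X - X * Akseq t X A0 k') else A0.
Fixpoint Bkseq (t : K) (X B0 : A) (k : nat) : A :=
  if k is k'.+1 then t^-1 *: (X * Bkseq t X B0 k' - Bkseq t X B0 k' * X) else B0.
End Uq.

(* The proof is a "rank-one" computation.  Write Z = E3, W = F3,
   D = q^(-G1-G3), L = q^(H1+H2), L' = L^-1 and C = L' D = q^(-2 G1).  In
   U_q(gl_3), Z and W commute with D, are scaled by q^(+-2) by L and L', and
   [Z, W] = (L - L') / kappa_q.  From these relations alone one shows, for
   B = W D and X = Z B - q^-2 B Z, that
       [Z, X] = -q^-2 [2]_q Z C,   [X, B] = -q^-2 [2]_q C B,   [C, X] = 0,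
   so the recursions for A_k and B_k have the closed forms A_k = E3 a^k and
   B_k = a^k B with a = -q^-2 q^(-2 G1).  On the other hand the two-sided
   inverse of N'_11(-q^-2 zeta) = 1 - a zeta in A[[zeta]] is the geometric
   series sum_k a^k zeta^k, which gives both identities. *)

From HB Require Import structures.
From mathcomp Require Import all_boot all_order all_algebra.
From mathcomp Require Import ring zify.
From Stdlib Require Import FunctionalExtensionality.
Import Order.TTheory GRing.Theory Num.Theory.
Set Implicit Arguments. Unset Strict Implicit.
Local Open Scope ring_scope.

Section FormalSeries.
Variable R : pzRingType.

Lemma smul_sconstl (c : R) (f : series R) n : smul (sconst c) f n = c * f n.
Proof.
rewrite /smul big_ord_recl /sconst /= subn0 big1 ?addr0 // => i _.
by rewrite mul0r.
Qed.

Lemma smul_sconstr (c : R) (f : series R) n : smul f (sconst c) n = f n * c.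
Proof.
rewrite /smul big_ord_recr /sconst /= subnn big1 ?add0r // => i _.
by rewrite subn_eq0 leqNgt ltn_ord mulr0.
Qed.

Definition geometric (a : R) : series R := fun n => a ^+ n.

Lemma smul_one_minus_zeta (N : series R) (a : R) n :
  smul N (one_minus_zeta a) n.+1 = N n.+1 - N n * a.
Proof.
rewrite /smul big_ord_recr big_ord_recr /one_minus_zeta /= subnn subSnn /=.
rewrite big1 ?add0r ?mulr1 ?mulrN 1?addrC // => i _.
have lt_i : (i < n)%N := ltn_ord i.
by rewrite !ifF ?mulr0 //; apply/eqP; lia.
Qed.

Lemma geometric_inverse (a : R) :
  smul (one_minus_zeta a) (geometric a) = sone R /\
  smul (geometric a) (one_minus_zeta a) = sone R.
Proof.
split; apply: functional_extensionality => -[|n].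
- by rewrite /smul big_ord1 /one_minus_zeta /sone /= mulr1.
- rewrite /smul big_ord_recl big_ord_recl /one_minus_zeta /sone /=.
  rewrite big1 ?addr0 => [|i _]; last by rewrite mul0r.
  by rewrite /bump /= subn0 subn1 mul1r mulNr -exprS subrr.
- by rewrite /smul big_ord1 /one_minus_zeta /sone /= mulr1.
- by rewrite smul_one_minus_zeta /geometric -exprSr subrr.
Qed.

Lemma left_inverse_geometric (a : R) (N : series R) :
  smul N (one_minus_zeta a) = sone R -> N = geometric a.
Proof.
move=> NK; apply: functional_extensionality; elim=> [|n IHn].
  have := congr1 (fun f => f 0%N) NK.
  by rewrite /smul big_ord1 /one_minus_zeta /sone /= mulr1.
have := congr1 (fun f => f n.+1) NK.
rewrite smul_one_minus_zeta IHn /sone /= => /eqP; rewrite subr_eq0 => /eqP ->.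
by rewrite /geometric exprSr.
Qed.
End FormalSeries.

Lemma subrACA (V : zmodType) (a b c d : V) : a - b - (c - d) = a - c - (b - d).
Proof. by rewrite !opprB [LHS]addrACA [RHS]addrACA [- c + _]addrC. Qed.

Section Commutators.
Variables (R : comPzRingType) (A : algType R).

Definition com (x y : A) : A := x * y - y * x.

Lemma comxx x : com x x = 0. Proof. exact: subrr. Qed.
Lemma com_comm x y : GRing.comm x y -> com x y = 0.
Proof. by rewrite /com => ->; rewrite subrr. Qed.
Lemma comMr x y z : com x (y * z) = com x y * z + y * com x z.
Proof. by rewrite /com mulrBl mulrBr !mulrA addrA subrK. Qed.
Lemma comMl x y z : com (x * y) z = x * com y z + com x z * y.
Proof. by rewrite /com mulrBl mulrBr !mulrA addrA subrK. Qed.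
Lemma comBl x y z : com (x - y) z = com x z - com y z.
Proof. by rewrite /com mulrBl mulrBr subrACA. Qed.
Lemma comBr x y z : com x (y - z) = com x y - com x z.
Proof. by rewrite /com mulrBl mulrBr subrACA. Qed.
Lemma comZl c x z : com (c *: x) z = c *: com x z.
Proof. by rewrite /com scalerBr -scalerAl -scalerAr. Qed.
Lemma comZr c x z : com x (c *: z) = c *: com x z.
Proof. by rewrite /com scalerBr -scalerAl -scalerAr. Qed.

Definition skew (P : A) (s : R) (Y : A) := P * Y = s *: (Y * P).

Lemma skewM P s1 s2 Y1 Y2 : skew P s1 Y1 -> skew P s2 Y2 -> skew P (s1 * s2) (Y1 * Y2).
Proof.
rewrite /skew => PY1 PY2.
by rewrite mulrA PY1 -scalerAl -(mulrA Y1 P) PY2 -scalerAr scalerA !mulrA.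
Qed.
Lemma skewB P s Y1 Y2 : skew P s Y1 -> skew P s Y2 -> skew P s (Y1 - Y2).
Proof. by rewrite /skew mulrBr mulrBl scalerBr => -> ->. Qed.
Lemma skewZ P s c Y : skew P s Y -> skew P s (c *: Y).
Proof. by rewrite /skew => PY; rewrite -scalerAr PY -scalerAl !scalerA mulrC. Qed.
End Commutators.

(* Normalisation of identities between K-linear combinations of fixed
   monomials in an algebra: everything is moved to the left-hand side, products
   and scalars are expanded, and the terms with equal monomials are gathered;
   what remains are the scalar identities between their coefficients. *)
Lemma lincomb_gather (K : fieldType) (V : lmodType K) (x u : V) (a b : K) :
  x + a *: u + b *: u = x + (a + b) *: u.
Proof. by rewrite -addrA -scalerDl. Qed.
Lemma lincomb_drop (K : fieldType) (V : lmodType K) (x u : V) (c : K) :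
  c = 0 -> x = 0 -> x + c *: u = 0.
Proof. by move=> -> ->; rewrite scale0r addr0. Qed.

Ltac lincomb_step :=
  match goal with
  | |- _ + _ *: ?u = 0 =>
      first [ rewrite lincomb_gather | rewrite (addrAC _ (_ *: u)) | apply: lincomb_drop ]
  end.
Ltac lincomb :=
  apply/eqP; rewrite -subr_eq0; apply/eqP; rewrite -[LHS]scale1r;
  repeat progress rewrite -?scalerAl -?scalerAr ?mulrDl ?mulrDr ?mulrBl ?mulrBr
    ?mulNr ?mulrN ?scalerDr ?scalerBr ?scalerN ?scalerA ?mulrA;
  rewrite ?opprD ?opprB ?opprK -?scaleNr -[LHS]add0r ?addrA;
  repeat lincomb_step; try reflexivity.

(* The denominators q^2 - 1 (of kappa_q) and q^2 + 1 (of [2]_q) do not vanish. *)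
Lemma sqr_sub1_neq0 (K : fieldType) (q : K) : q ^+ 2 != 1 -> q * q - 1 != 0.
Proof. by rewrite subr_eq0 -expr2. Qed.

Lemma sqr_add1_neq0 (K : fieldType) (q : K) : q != 0 -> q + q^-1 != 0 -> q * q + 1 != 0.
Proof.
move=> q_neq0 t_neq0.
have -> : q * q + 1 = q * (q + q^-1) by rewrite mulrDr mulfV.
exact: mulf_neq0.
Qed.

Lemma kappa_neq0 (K : fieldType) (q : K) : q != 0 -> q ^+ 2 != 1 -> q - q^-1 != 0.
Proof.
move=> q_neq0 q2_neq1; apply: contraNneq (sqr_sub1_neq0 q2_neq1) => kq0.
by rewrite -(mulfV q_neq0) -mulrBr kq0 mulr0.
Qed.

(* Abstract rank-one setting: Z, W play the roles of E3, F3, the Cartan-type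
   elements L, L' of q^(+-(H1+H2)), and D of the twist q^(-G1-G3). *)
Section RankOne.
Variables (K : fieldType) (A : algType K) (q : K).
Hypotheses (q_neq0 : q != 0) (q2_neq1 : q ^+ 2 != 1) (t_neq0 : q + q^-1 != 0).
Variables (Z W D L L' : A).
Hypotheses (ZD : GRing.comm Z D) (WD : GRing.comm W D).
Hypotheses (LD : GRing.comm L D) (L'D : GRing.comm L' D).
Hypotheses (LZ : skew L (q ^+ 2) Z) (L'Z : skew L' (q ^- 2) Z).
Hypotheses (LW : skew L (q ^- 2) W) (L'W : skew L' (q ^+ 2) W).
Hypothesis ZW : com Z W = (q - q^-1)^-1 *: (L - L').

Ltac qfield := field; by rewrite ?q_neq0 ?(sqr_sub1_neq0 q2_neq1) ?(sqr_add1_neq0 q_neq0 t_neq0).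

Let B := W * D.
Let X := Z * B - q ^- 2 *: (B * Z).
Let C := L' * D.

Lemma com_Z_B : com Z B = (q - q^-1)^-1 *: ((L - L') * D).
Proof. by rewrite comMr ZW (com_comm ZD) mulr0 addr0 -scalerAl. Qed.

Lemma Cartan_past_Z : (L - L') * D * Z = Z * ((q ^+ 2 *: L - q ^- 2 *: L') * D).
Proof. by rewrite -mulrA -ZD mulrA mulrBl LZ L'Z !scalerAr -mulrBr !mulrA. Qed.

Lemma com_Z_X : com Z X = (- q ^- 2 * (q + q^-1)) *: (Z * C).
Proof.
have comZBZ : com Z (B * Z) = com Z B * Z by rewrite comMr comxx mulr0 addr0.
have comZZB : com Z (Z * B) = Z * com Z B by rewrite comMr comxx mul0r add0r.
rewrite /X comBr comZr comZBZ comZZB com_Z_B -scalerAl Cartan_past_Z /C.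
lincomb; qfield.
Qed.

Lemma Cartan_past_B : (L - L') * D * B = W * ((q ^- 2 *: L - q ^+ 2 *: L') * D * D).
Proof.
rewrite /B mulrA -(mulrA _ D W) -WD mulrA mulrBl LW L'W !scalerAr -mulrBr.
by rewrite !mulrA.
Qed.
Lemma B_past_Cartan : B * ((L - L') * D) = W * ((L - L') * D * D).
Proof.
have DH : GRing.comm D (L - L') by apply: commrB; [exact/esym | exact/esym].
by rewrite /B -(mulrA W) (mulrA D) DH.
Qed.
Lemma C_B : C * B = q ^+ 2 *: (W * (L' * D * D)).
Proof. by rewrite /C /B mulrA -(mulrA L') -WD mulrA L'W -!scalerAl !mulrA. Qed.

Lemma com_X_B : com X B = (- q ^- 2 * (q + q^-1)) *: (C * B).
Proof.
have comZBB : com (Z * B) B = com Z B * B by rewrite comMl comxx mulr0 add0r.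
have comBZB : com (B * Z) B = B * com Z B by rewrite comMl comxx mul0r addr0.
rewrite /X comBl comZl comZBB comBZB com_Z_B -scalerAl -scalerAr Cartan_past_B.
by rewrite B_past_Cartan C_B; lincomb; qfield.
Qed.

(* C = L' D scales Z and B = W D by inverse factors, hence commutes with X. *)
Lemma skew_C_Z : skew C (q ^- 2) Z.
Proof. by rewrite /skew /C -mulrA -ZD mulrA L'Z -scalerAl -mulrA. Qed.
Lemma skew_C_B : skew C (q ^+ 2) B.
Proof. by rewrite /skew C_B /B /C -(mulrA W) (mulrA D) -L'D !mulrA. Qed.

Lemma comm_C_X : GRing.comm C X.
Proof.
have q2_neq0 : q ^+ 2 != 0 by rewrite expf_neq0.
have CZB := skewM skew_C_Z skew_C_B; have CBZ := skewM skew_C_B skew_C_Z.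
rewrite mulVf // in CZB; rewrite mulfV // in CBZ.
by have := skewB CZB (skewZ (q ^- 2) CBZ); rewrite /skew scale1r.
Qed.

Let a := (- q ^- 2) *: C.

Lemma comm_a_X n : GRing.comm (a ^+ n) X.
Proof.
apply/commr_sym/commrX/commr_sym.
by rewrite /GRing.comm -scalerAl -scalerAr comm_C_X.
Qed.

Lemma Akseq_rank_one n : Akseq (q + q^-1) X Z n = Z * a ^+ n.
Proof.
elim: n => [|n IHn] /=; first by rewrite mulr1.
rewrite IHn -mulrA comm_a_X !mulrA -mulrBl.
rewrite [_ - _]com_Z_X -scalerAl scalerA (exprS a n) (mulrA Z a) /a -scalerAr -scalerAl.
by congr (_ *: _); qfield.
Qed.

Lemma Bkseq_rank_one n : Bkseq (q + q^-1) X B n = a ^+ n * B.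
Proof.
elim: n => [|n IHn] /=; first by rewrite mul1r.
rewrite IHn (mulrA X) -comm_a_X -(mulrA _ X B) -(mulrA _ B X) -mulrBr.
rewrite [_ - _]com_X_B -scalerAr scalerA (exprSr a n) -(mulrA _ a B) /a -scalerAl -scalerAr.
by congr (_ *: _); qfield.
Qed.
End RankOne.

(* The relations of U_q(gl_3) that are used; q^(a G1 + b G2 + c G3) is written qX a b c and q^nu is e nu. *)
Section Uqgl3.
Variables (K : fieldType) (A : algType K) (e : K -> K).
Variables (E1 E2 F1 F2 : A) (qX : K -> K -> K -> A).
Hypotheses (e0 : e 0 = 1) (eD : forall a b, e (a + b) = e a * e b).
Hypotheses (qX0 : qX 0 0 0 = 1)
  (qXD : forall a b c a' b' c', qX a b c * qX a' b' c' = qX (a + a') (b + b') (c + c')).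
Hypotheses (conjE1 : forall a b c, qX a b c * E1 * qX (- a) (- b) (- c) = e (a - b) *: E1)
  (conjE2 : forall a b c, qX a b c * E2 * qX (- a) (- b) (- c) = e (b - c) *: E2)
  (conjF1 : forall a b c, qX a b c * F1 * qX (- a) (- b) (- c) = e (- (a - b)) *: F1)
  (conjF2 : forall a b c, qX a b c * F2 * qX (- a) (- b) (- c) = e (- (b - c)) *: F2).
Local Notation q := (e 1).
Local Notation kq := (e 1 - (e 1)^-1).
Let E3 := E1 * E2 - q^-1 *: (E2 * E1).
Let F3 := F2 * F1 - q *: (F1 * F2).
Hypothesis q2_neq1 : q ^+ 2 != 1.
Hypotheses (EF11 : com E1 F1 = kq^-1 *: (qX 1 (-1) 0 - qX (-1) 1 0))
  (EF22 : com E2 F2 = kq^-1 *: (qX 0 1 (-1) - qX 0 (-1) 1))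
  (EF12 : com E1 F2 = 0) (EF21 : com E2 F1 = 0).

Lemma e_mulN x : e x * e (- x) = 1.
Proof. by rewrite -eD subrr. Qed.

Lemma e_neq0 x : e x != 0.
Proof. by apply: contra_eq_neq (e_mulN x) => ->; rewrite mul0r eq_sym oner_neq0. Qed.

Lemma e_opp x : e (- x) = (e x)^-1.
Proof. by rewrite -[e (- x)]mul1r -(mulVf (e_neq0 x)) -mulrA e_mulN mulr1. Qed.

Lemma q_neq0 : q != 0. Proof. exact: e_neq0. Qed.

Ltac qfield := field; by rewrite ?q_neq0 ?(sqr_sub1_neq0 q2_neq1).

Lemma qX_comm a b c a' b' c' : GRing.comm (qX a b c) (qX a' b' c').
Proof. by rewrite /GRing.comm !qXD [a + _]addrC [b + _]addrC [c + _]addrC. Qed.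

Lemma skew_of_conj (Y : A) (s : K -> K -> K -> K) :
  (forall a b c, qX a b c * Y * qX (- a) (- b) (- c) = s a b c *: Y) ->
  forall a b c, skew (qX a b c) (s a b c) Y.
Proof.
move=> conjY a b c.
have qXV : qX (- a) (- b) (- c) * qX a b c = 1 by rewrite qXD !addNr qX0.
by rewrite /skew -[LHS]mulr1 -qXV !mulrA conjY -scalerAl.
Qed.

Lemma skew_E3 a b c : skew (qX a b c) (e (a - b) * e (b - c)) E3.
Proof.
apply: skewB; first exact: skewM (skew_of_conj conjE1 _ _ _) (skew_of_conj conjE2 _ _ _).
by apply: skewZ; rewrite mulrC; apply: skewM (skew_of_conj conjE2 _ _ _) (skew_of_conj conjE1 _ _ _).
Qed.
Lemma skew_F3 a b c : skew (qX a b c) (e (- (b - c)) * e (- (a - b))) F3.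
Proof.
apply: skewB; first exact: skewM (skew_of_conj conjF2 _ _ _) (skew_of_conj conjF1 _ _ _).
by apply: skewZ; rewrite mulrC; apply: skewM (skew_of_conj conjF1 _ _ _) (skew_of_conj conjF2 _ _ _).
Qed.

Lemma com_E3_F1 : com E3 F1 = - (E2 * qX (-1) 1 0).
Proof.
have K1E2 : skew (qX 1 (-1) 0) q^-1 E2.
  by have := skew_of_conj conjE2 1 (-1) 0; rewrite subr0 e_opp.
have K1'E2 : skew (qX (-1) 1 0) q E2.
  by have := skew_of_conj conjE2 (-1) 1 0; rewrite subr0.
rewrite comBl comZl !comMl EF21 EF11 mulr0 add0r mul0r addr0.
rewrite -scalerAl -scalerAr mulrBl mulrBr K1E2 K1'E2.
lincomb; qfield.
Qed.

Lemma com_E3_F2 : com E3 F2 = q^-1 *: (E1 * qX 0 1 (-1)).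
Proof.
have K2E1 : skew (qX 0 1 (-1)) q^-1 E1.
  by have := skew_of_conj conjE1 0 1 (-1); rewrite sub0r e_opp.
have K2'E1 : skew (qX 0 (-1) 1) q E1.
  by have := skew_of_conj conjE1 0 (-1) 1; rewrite sub0r opprK.
rewrite comBl comZl !comMl EF22 EF12 mul0r addr0 mulr0 add0r.
rewrite -scalerAl -scalerAr mulrBl mulrBr K2E1 K2'E1.
lincomb; qfield.
Qed.

Lemma com_E3_F3 : com E3 F3 = kq^-1 *: (qX 1 0 (-1) - qX (-1) 0 1).
Proof.
have K2F1 : skew (qX 0 1 (-1)) q F1.
  by have := skew_of_conj conjF1 0 1 (-1); rewrite sub0r opprK.
have K1'F2 : skew (qX (-1) 1 0) q^-1 F2.
  by have := skew_of_conj conjF2 (-1) 1 0; rewrite subr0 e_opp.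
have Leibniz : com E3 F3 = com E1 F1 * qX 0 1 (-1) + com E2 F2 * qX (-1) 1 0.
  rewrite comBr comZr !comMr com_E3_F1 com_E3_F2 mulNr -!scalerAl -!mulrA K2F1 K1'F2.
  rewrite /com; lincomb; qfield.
(* The mixed products K1' K2 and K2 K1' cancel; K1 K2 = L and K2' K1' = L'. *)
rewrite Leibniz EF11 EF22 -!scalerAl !mulrBl !qXD ?addr0 ?add0r ?addrN ?addNr.
lincomb; qfield.
Qed.

Hypothesis t_neq0 : q + q^-1 != 0.

Let D := qX (-1) 0 (-1).
Let L := qX 1 0 (-1).
Let L' := qX (-1) 0 1.

(* E3 and F3 D satisfy the hypotheses of the rank-one computation, with the
   Cartan elements L = q^(H1+H2) and L' = q^-(H1+H2). *)
Lemma root_vector_series n :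
  let X := E3 * (F3 * D) - q ^- 2 *: (F3 * D * E3) in
  let a := (- q ^- 2) *: qX (-2) 0 0 in
  Akseq (q + q^-1) X E3 n = E3 * a ^+ n /\
  Bkseq (q + q^-1) X (F3 * D) n = a ^+ n * (F3 * D).
Proof.
have E3D : GRing.comm E3 D.
  have := skew_E3 (-1) 0 (-1); rewrite subr0 sub0r !opprK e_opp mulVf ?q_neq0 //.
  by rewrite /skew scale1r.
have F3D : GRing.comm F3 D.
  have := skew_F3 (-1) 0 (-1); rewrite subr0 sub0r !opprK e_opp mulVf ?q_neq0 //.
  by rewrite /skew scale1r.
have LE3 : skew L (q ^+ 2) E3 by have := skew_E3 1 0 (-1); rewrite subr0 sub0r !opprK -expr2.
have L'E3 : skew L' (q ^- 2) E3.
  by have := skew_E3 (-1) 0 1; rewrite subr0 sub0r e_opp -expr2 exprVn.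
have LF3 : skew L (q ^- 2) F3.
  by have := skew_F3 1 0 (-1); rewrite subr0 sub0r !opprK e_opp -expr2 exprVn.
have L'F3 : skew L' (q ^+ 2) F3.
  by have := skew_F3 (-1) 0 1; rewrite subr0 sub0r !opprK -expr2.
have LD : GRing.comm L D := qX_comm _ _ _ _ _ _.
have L'D : GRing.comm L' D := qX_comm _ _ _ _ _ _.
have C_def : L' * D = qX (-2) 0 0 by rewrite qXD addr0 addrN; congr qX; ring.
rewrite /= -C_def; split.
- exact (Akseq_rank_one q_neq0 q2_neq1 t_neq0 E3D F3D L'D LE3 L'E3 L'F3 com_E3_F3 n).
- exact (Bkseq_rank_one q_neq0 q2_neq1 t_neq0 E3D F3D LD L'D L'E3 LF3 L'F3 com_E3_F3 n).
Qed.
End Uqgl3.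

Theorem mainTheorem7 (K : numClosedFieldType) (A : algType K) (e : K -> K)
  (E1 E2 F1 F2 : A) (qX : K -> K -> K -> A)
  (he0 : e 0 = 1) (heD : forall a b, e (a + b) = e a * e b)
  (hq2 : e 1 ^+ 2 != 1) (h2 : e 1 + (e 1)^-1 != 0)
  (hU : is_Uqgl3 e E1 E2 F1 F2 qX) :
  let q := e 1 in
  let kq := q - q^-1 in
  let q2 := q + q^-1 in
  let E3 := E1 * E2 - q^-1 *: (E2 * E1) in
  let F3 := F2 * F1 - q *: (F1 * F2) in
  let A0 := E3 in
  let B0 := F3 * qX (-1) 0 (-1) in
  let X := A0 * B0 - q ^- 2 *: (B0 * A0) in
  let EAB : series A := Akseq q2 X A0 in
  let EDAB : series A := Bkseq q2 X B0 in
  let N11 : series A := one_minus_zeta ((- q ^- 2) *: qX (-2) 0 0) in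
  let N13 := (kq * q) *: (F3 * qX (-1) 0 (-1)) in
  let N31 := kq *: E3 in
  (exists Ninv : series A, smul N11 Ninv = sone A /\ smul Ninv N11 = sone A) /\
  (forall Ninv : series A, smul N11 Ninv = sone A -> smul Ninv N11 = sone A ->
     EAB = (fun n => kq^-1 *: smul (sconst N31) Ninv n) /\
     EDAB = (fun n => (kq^-1 * q^-1) *: smul Ninv (sconst N13) n)).
Proof.
move=> q kq q2 E3 F3 A0 B0 X EAB EDAB N11 N13 N31.
case: hU => qX0 qXD [conjE1 conjE2 conjF1 conjF2] [EF11 EF22 EF12 EF21] _.
have series := root_vector_series he0 heD qX0 qXD conjE1 conjE2 conjF1 conjF2 hq2
  EF11 EF22 EF12 EF21 h2.
have q_neq0 : q != 0 := e_neq0 he0 heD 1.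
have kq_neq0 : kq != 0 := kappa_neq0 q_neq0 hq2.
split; first by eexists; exact: geometric_inverse.
move=> N _ NK; rewrite (left_inverse_geometric NK).
split; apply: functional_extensionality => n; have [EABn EDABn] := series n.
- by rewrite /EAB EABn smul_sconstl /geometric -scalerAl scalerA mulVf ?scale1r.
- rewrite /EDAB EDABn smul_sconstr /geometric -scalerAr scalerA mulrACA.
  by rewrite !mulVf ?mul1r ?scale1r.
Qed.
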